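(* There exists a constant $C$, independent of $h$, $T$, the interface location and $\beta^\pm$, such that for every $T\in\mathcal T_h^i$ and every $v_h\in S_h(T)$, with polynomial components $v_h^\pm\in\mathbb Q_1$ regarded as functions on $\omega_T$, $$\|\beta^+\nabla v_h^+\cdot\bar{\mathbf n}-\beta^-\nabla v_h^-\cdot\bar{\mathbf n}\|_{L^2(\tau_{\omega_T})}\le C(\beta^+-\beta^-)h^{1/2}|v_h^s|_{H^2(\omega_T)}\quad\text{for } s=+ \text{ and for } s=-.$$
   Context: $\mathbb Q_1$ is the space of trilinear polynomials. $\Gamma$ is a closed $C^2$ surface separating a bounded domain $\Omega\subset\mathbb R^3$ (a union of finitely many rectangular parallelepipeds) into $\Omega^\pm$, with reach $r_\Gamma$ (largest $r$ such that normal segments of length $2r$ centered at distinct points of $\Gamma$ are disjoint); $\beta=\beta^\pm>0$ on $\Omega^\pm$ with $\beta^+\ge\beta^-$. $\mathcal T_h$ is a Cartesian mesh by cubes of edge length $h$ with $h<r_\Gamma/(3\sqrt3)$, $\Gamma$ meeting every mesh edge in at most one point and the boundary of every mesh face in at most two points, no vertex on $\Gamma$. $\mathcal T_h^i$ is the set of elements meeting $\Gamma$, $\omega_T$ the union of elements $T'$ with $\overline{T'}\cap\overline T\ne\emptyset$, $T^\pm=T\cap\Omega^\pm$. For $T\in\mathcal T_h^i$, $K_T$ is the triangle spanned by three points where $\Gamma$ meets edges of $T$, selected as: if $\Gamma$ cuts 3 faces, all three; if $\Gamma$ cuts 4 faces separating the endpoints of an edge $e$ from the other vertices, the three farthest from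 $e$; if the four points lie on four parallel edges, any three; if $\Gamma$ cuts 5 faces, the three on parallel edges; if $\Gamma$ cuts 6 faces, every other one of the six (on three mutually orthogonal edges). $\tau(T)$ is the plane of $K_T$, $\bar{\mathbf n}$ its unit normal, $F$ the centroid of $K_T$, $L(X)=(X-D)\cdot\bar{\mathbf n}$ with $D$ a vertex of $K_T$, $\tau_{\omega_T}=\omega_T\cap\tau(T)$. $\mathcal C_T(p)=p+\left(\frac{\beta^-}{\beta^+}-1\right)(\nabla p(F)\cdot\bar{\mathbf n})L$, and $S_h(T)$ consists of the functions $v_h$ with $v_h^-:=v_h|_{T^-}=p$ and $v_h^+:=v_h|_{T^+}=\mathcal C_T(p)$ for some $p\in\mathbb Q_1$. *)

From HB Require Import structures.
From mathcomp Require Import all_boot all_order all_algebra.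
From mathcomp Require Import all_classical all_reals all_analysis.
Import Order.TTheory GRing.Theory Num.Theory numFieldNormedType.Exports.

Set Implicit Arguments.
Unset Strict Implicit.
Unset Printing Implicit Defensive.

Local Open Scope classical_set_scope.
Local Open Scope ring_scope.

Section Defs.
Variable R : realType.

Definition pt := 'rV[R]_3.
Definition idx := 'rV[int]_3.

Definition i0 : 'I_3 := inord 0.
Definition i1 : 'I_3 := inord 1.
Definition i2 : 'I_3 := inord 2.

Definition mk3 (x y z : R) : pt := \row_(i < 3) [:: x; y; z]`_i.

Definition dot (u v : pt) : R := \sum_(i < 3) u ord0 i * v ord0 i.
Definition enorm (u : pt) : R := Num.sqrt (dot u u).
Definition dist_set (x : pt) (E : set pt) : R := inf [set enorm (x - y) | y in E].

Definition ev (i : 'I_3) : pt := delta_mx ord0 i.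
Definition pd (i : 'I_3) (f : pt -> R) : pt -> R := fun x => 'D_(ev i) f x.
Definition gradv (f : pt -> R) (x : pt) : pt := \row_(i < 3) pd i f x.
Definition grad_dot (f : pt -> R) (x n : pt) : R := \sum_(i < 3) pd i f x * n ord0 i.

Definition Q1 (p : pt -> R) : Prop :=
  exists c : 'I_2 -> 'I_2 -> 'I_2 -> R, forall x : pt,
    p x = \sum_(a < 2) \sum_(b < 2) \sum_(e < 2)
            c a b e * x ord0 i0 ^+ a * x ord0 i1 ^+ b * x ord0 i2 ^+ e.

Definition leb3 := (((@lebesgue_measure R) \x (@lebesgue_measure R)) \x (@lebesgue_measure R))%E.
Definition leb2 := ((@lebesgue_measure R) \x (@lebesgue_measure R))%E.

Definition int3 (A : set pt) (f : pt -> R) : \bar R :=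
  (\int[leb3]_(q in [set q | A (mk3 q.1.1 q.1.2 q.2)]) (f (mk3 q.1.1 q.1.2 q.2))%:E)%E.

Definition H2semi_sq (A : set pt) (v : pt -> R) : \bar R :=
  (\sum_(i < 3) \sum_(j < 3) int3 A (fun x => ((pd i (pd j v) x) ^+ 2)%R))%E.

(** Squared L^2 norm on the planar set  A \cap {D + s u + t w}, where (u, w) is
    an orthonormal frame of the plane: the surface measure of the plane is the
    image of Lebesgue measure on R^2 by (s,t) |-> D + s u + t w. *)
Definition planeL2_sq (D u w : pt) (A : set pt) (g : pt -> R) : \bar R :=
  (\int[leb2]_(q in [set q | A (D + q.1 *: u + q.2 *: w)%R])
      ((g (D + q.1 *: u + q.2 *: w)) ^+ 2)%R%:E)%E.

Definition ivec (k : idx) : pt := map_mx (fun z : int => z%:~R) k.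
Definition eidx (i : 'I_3) : idx := delta_mx ord0 i.
Definition vtx (o : pt) (h : R) (k : idx) : pt := o + h *: ivec k.
Definition cube (o : pt) (h : R) (k : idx) : set pt :=
  [set x | forall i : 'I_3, vtx o h k ord0 i <= x ord0 i <= vtx o h k ord0 i + h].
Definition bin (d : idx) : Prop := forall i : 'I_3, d ord0 i = 0 \/ d ord0 i = 1.
Definition is_vertex (o : pt) (h : R) (k : idx) (x : pt) : Prop :=
  exists d, bin d /\ x = vtx o h (k + d).
Definition segment (a b : pt) : set pt := [set a + t *: (b - a) | t in `[0, 1]%classic].
(* the edge of cube k starting at vertex k+d in direction i (requires d_i = 0) *)
Definition edge (o : pt) (h : R) (k d : idx) (i : 'I_3) : set pt :=
  segment (vtx o h (k + d)) (vtx o h (k + d + eidx i)).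
Definition is_edge_dir (o : pt) (h : R) (k : idx) (i : 'I_3) (E : set pt) : Prop :=
  exists d, [/\ bin d, d ord0 i = 0 & E = edge o h k d i].
Definition is_edge (o : pt) (h : R) (k : idx) (E : set pt) : Prop :=
  exists i, is_edge_dir o h k i E.
Definition face (o : pt) (h : R) (k : idx) (i : 'I_3) (s : 'I_2) : set pt :=
  [set x | cube o h k x /\ x ord0 i = vtx o h k ord0 i + (s : nat)%:R * h].
Definition face_bd (o : pt) (h : R) (k : idx) (i : 'I_3) (s : 'I_2) : set pt :=
  [set x | exists E, [/\ is_edge o h k E, E `<=` face o h k i s & E x]].

Definition C2_on (U : set pt) (phi : pt -> R) : Prop :=
  forall x, U x -> forall i j : 'I_3,
    [/\ derivable phi x (ev i), derivable (pd i phi) x (ev j)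
      & {for x, continuous (pd j (pd i phi))}].
Definition local_rep (G : set pt) (p : pt) (U : set pt) (phi : pt -> R) : Prop :=
  [/\ open U, U p, C2_on U phi,
      (forall x, U x -> (G x <-> phi x = 0))
    & (forall x, U x -> G x -> gradv phi x != 0)].
Definition C2_closed_surface (G : set pt) : Prop :=
  [/\ G !=set0, compact G & forall p, G p -> exists U phi, local_rep G p U phi].
Definition unit_normal (G : set pt) (p nu : pt) : Prop :=
  exists U phi, local_rep G p U phi /\ nu = (enorm (gradv phi p))^-1 *: gradv phi p.
Definition normal_segment (p nu : pt) (r : R) : set pt :=
  [set p + t *: nu | t in `[- r, r]%classic].
Definition reach_ok (G : set pt) (r : R) : Prop :=
  forall p q nup nuq, G p -> G q -> p <> q -> unit_normal G p nup ->
    unit_normal G q nuq -> normal_segment p nup r `&` normal_segment q nuq r = set0.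
Definition reach (G : set pt) : R := sup [set r | 0 < r /\ reach_ok G r].

Definition edge_pts (o : pt) (h : R) (k : idx) (G : set pt) : set pt :=
  [set x | G x /\ exists E, is_edge o h k E /\ E x].
Definition on_edge_dir (o : pt) (h : R) (k : idx) (i : 'I_3) (x : pt) : Prop :=
  exists E, is_edge_dir o h k i E /\ E x.
Definition face_cut (o : pt) (h : R) (k : idx) (G : set pt) (f : 'I_3 * 'I_2) : Prop :=
  face_bd o h k f.1 f.2 `&` G !=set0.
Definition nb_cut_faces (o : pt) (h : R) (k : idx) (G : set pt) : nat :=
  #|[pred f : 'I_3 * 'I_2 | `[< face_cut o h k G f >]]|.
Definition same_side (o : pt) (h : R) (k : idx) (G : set pt) (x y : pt) : Prop :=
  exists S, [/\ connected S, S `<=` cube o h k `\` G, S x & S y].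
Definition separates_edge (o : pt) (h : R) (k : idx) (G : set pt) (e : set pt) : Prop :=
  exists d i, [/\ bin d, d ord0 i = 0, e = edge o h k d i &
    let a := vtx o h (k + d) in let b := vtx o h (k + d + eidx i) in
    [/\ same_side o h k G a b,
        (forall c, is_vertex o h k c -> c <> a -> c <> b -> ~ same_side o h k G c a)
      & (forall c c', is_vertex o h k c -> is_vertex o h k c' -> c <> a -> c <> b ->
           c' <> a -> c' <> b -> same_side o h k G c c')]].
Definition share_face (o : pt) (h : R) (k : idx) (x y : pt) : Prop :=
  exists i s, face o h k i s x /\ face o h k i s y.

(* (D1, D2, D3) are the vertices of K_T selected by the rules of the paper *)
Definition KT_vertices (o : pt) (h : R) (k : idx) (G : set pt) (D1 D2 D3 : pt) : Prop :=
  let P := edge_pts o h k G in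
  let in3 := fun x => x = D1 \/ x = D2 \/ x = D3 in
  [/\ P D1, P D2 & P D3] /\ [/\ D1 <> D2, D1 <> D3 & D2 <> D3] /\
  [\/
      (nb_cut_faces o h k G = 3 /\ (forall x, P x -> in3 x)),
      (nb_cut_faces o h k G = 4 /\ exists e, separates_edge o h k G e /\
        (forall q, P q -> ~ in3 q ->
           [/\ dist_set q e <= dist_set D1 e, dist_set q e <= dist_set D2 e
             & dist_set q e <= dist_set D3 e])),
      (nb_cut_faces o h k G = 4 /\ exists i, forall x, P x -> on_edge_dir o h k i x)
    |
      (nb_cut_faces o h k G = 5 /\ exists i,
        [/\ on_edge_dir o h k i D1, on_edge_dir o h k i D2 & on_edge_dir o h k i D3])
    \/
      (nb_cut_faces o h k G = 6 /\
        (exists i1 i2 i3, [/\ i1 != i2, i1 != i3 & i2 != i3] /\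
            [/\ on_edge_dir o h k i1 D1, on_edge_dir o h k i2 D2 & on_edge_dir o h k i3 D3]) /\
        [/\ ~ share_face o h k D1 D2, ~ share_face o h k D1 D3 & ~ share_face o h k D2 D3])].

Definition omegaT (o : pt) (h : R) (M : seq idx) (k : idx) : set pt :=
  [set x | exists2 k', k' \in M & (cube o h k `&` cube o h k' !=set0) /\ cube o h k' x].

Definition CT (bm bp : R) (F nb D : pt) (p : pt -> R) : pt -> R :=
  fun x => p x + (bm / bp - 1) * grad_dot p F nb * dot (x - D) nb.

Definition setting (o : pt) (h : R) (M : seq idx) (Om Omm Omp G : set pt) : Prop :=
  0 < h /\ [/\
      Om = interior [set x | exists2 k, k \in M & cube o h k x],
      connected Om,
      [/\ C2_closed_surface G, G `<=` Om, open Omm, open Omp &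
          [/\ Omm `&` Omp = set0, Om `\` G = Omm `|` Omp,
              G `<=` closure Omm & G `<=` closure Omp]],
      h < reach G / (3 * Num.sqrt 3) &
      forall k, k \in M ->
        [/\ forall E, is_edge o h k E -> forall x y, G x -> G y -> E x -> E y -> x = y,
            forall i s x y z, G x -> G y -> G z -> face_bd o h k i s x ->
              face_bd o h k i s y -> face_bd o h k i s z -> x = y \/ x = z \/ y = z
          & forall x, is_vertex o h k x -> ~ G x]].

End Defs.

From HB Require Import structures.
From mathcomp Require Import all_boot all_order all_algebra.
From mathcomp Require Import all_classical all_reals all_analysis.
From mathcomp Require Import ring lra.
Import Order.TTheory GRing.Theory Num.Theory numFieldNormedType.Exports.

(* On an interface element T both pieces of v_h are trilinear and differ by an
   affine function, so they have the same second derivatives, and C_T is tuned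
   so that the flux jump vanishes at the centroid F of K_T: the jump equals
   (beta+ - beta-) (grad p (x) - grad p (F)) . n.  Expanding p around F, this
   increment is bounded on omega_T, which lies within 2h of F in every
   coordinate, by h times the mixed derivatives d_i d_j p (F) plus h^2 times
   d_0 d_1 d_2 p, and the plane section of omega_T has area at most (12 h)^2.
   Conversely each d_i d_j p is affine in the remaining variable, so on a
   quarter of T, which lies in omega_T, its square dominates a fixed fraction of
   its value at F and of its slope; this bounds |v_h^s|_{H^2(omega_T)}^2 below by
   h^3 times the same quantity, and the ratio leaves the factor h^{1/2}. *)

Set Implicit Arguments.
Unset Strict Implicit.
Unset Printing Implicit Defensive.
Local Open Scope classical_set_scope.
Local Open Scope ring_scope.

Lemma big_ord3 (T : Type) (idx : T) (op : Monoid.law idx) (F : 'I_3 -> T) :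
  \big[op/idx]_(i < 3) F i = op (op (F i0) (F i1)) (F i2).
Proof.
rewrite !big_ord_recr big_ord0 /= Monoid.mul1m.
by congr (op (op (F _) (F _)) (F _)); apply: val_inj; rewrite /= inordK.
Qed.

Lemma ord3P (j : 'I_3) : j = i0 \/ j = i1 \/ j = i2.
Proof.
case: j => -[|[|[|//]]] ?; [left|right; left|right; right];
  by apply: val_inj; rewrite /= inordK.
Qed.

Section RealInequalities.
Variable R : realFieldType.

Lemma cauchy_schwarz3 (n0 n1 n2 e0 e1 e2 : R) :
  (n0 * e0 + n1 * e1 + n2 * e2) ^+ 2 <=
  (n0 ^+ 2 + n1 ^+ 2 + n2 ^+ 2) * (e0 ^+ 2 + e1 ^+ 2 + e2 ^+ 2).
Proof.
rewrite -subr_ge0.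
have -> : (n0 ^+ 2 + n1 ^+ 2 + n2 ^+ 2) * (e0 ^+ 2 + e1 ^+ 2 + e2 ^+ 2)
    - (n0 * e0 + n1 * e1 + n2 * e2) ^+ 2 =
  (n0 * e1 - n1 * e0) ^+ 2 + (n0 * e2 - n2 * e0) ^+ 2 + (n1 * e2 - n2 * e1) ^+ 2.
  by ring.
by rewrite !addr_ge0 ?sqr_ge0.
Qed.

Lemma sqr_sum3_le (x y z : R) : (x + y + z) ^+ 2 <= 3 * (x ^+ 2 + y ^+ 2 + z ^+ 2).
Proof.
have := cauchy_schwarz3 1 1 1 x y z; rewrite !expr1n !mul1r; lra.
Qed.

Lemma sqr_le_of_norm (y c : R) : `|y| <= c -> y ^+ 2 <= c ^+ 2.
Proof.
move=> yc; rewrite -real_normK ?num_real //.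
by rewrite lerXn2r ?nnegrE ?(le_trans _ yc).
Qed.

Lemma affine_sqr_ge (A B s t : R) : B ^+ 2 <= A ^+ 2 -> 0 <= s <= 1 -> 0 <= t <= 1 / 4 ->
  ((A + s * (B - A)) ^+ 2 + (B - A) ^+ 2) / 20 <= (A + t * (B - A)) ^+ 2.
Proof.
wlog A0 : A B / 0 <= A => [wlogA BA hs ht|].
  have [A0|A0] := lerP 0 A; first exact: wlogA.
  have e u : (A + u * (B - A)) ^+ 2 = (- A + u * (- B - - A)) ^+ 2 by ring.
  rewrite !e (_ : (B - A) ^+ 2 = (- B - - A) ^+ 2); last by ring.
  by apply: wlogA; rewrite ?sqrrN // oppr_ge0 ltW.
move=> BA /andP[s0 s1] /andP[t0 t1].
have /andP[AB BA'] : - A <= B <= A.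
  by rewrite -ler_norml -ler_sqr ?nnegrE // real_normK ?num_real.
have sA : 0 <= A + (A + s * (B - A)) by nra.
have sA' : 0 <= A - (A + s * (B - A)) by nra.
have tA : 0 <= (A + t * (B - A)) - A / 2 by nra.
have hs : (A + s * (B - A)) ^+ 2 <= A ^+ 2 by nra.
have hBA : (B - A) ^+ 2 <= 4 * A ^+ 2 by nra.
have ht : A ^+ 2 / 4 <= (A + t * (B - A)) ^+ 2 by nra.
lra.
Qed.

Lemma affine_sqr_ge_on_quarter (al d c a h : R) : 0 < h -> a <= c <= a + h ->
  exists2 s, a <= s /\ s + h / 4 <= a + h &
    forall t, s <= t <= s + h / 4 ->
      (al ^+ 2 + h ^+ 2 * d ^+ 2) / 20 <= (al + d * (t - c)) ^+ 2.
Proof.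
move=> h0 /andP[ac ca].
have frac x r : 0 <= x <= r * h -> 0 <= x / h <= r.
  by case/andP=> x0 xr; rewrite ler_pdivrMr // xr divr_ge0 // ltW.
have hn0 : h != 0 by rewrite gt_eqF.
pose A := al + d * (a - c); pose B := al + d * (a + h - c).
have [BA|AB] := lerP (B ^+ 2) (A ^+ 2).
- exists a; first by split; lra.
  move=> t /andP[tl tr].
  rewrite (_ : al + d * (t - c) = A + (t - a) / h * (B - A)); last by rewrite /A /B; field.
  rewrite (_ : h ^+ 2 * d ^+ 2 = (B - A) ^+ 2); last by rewrite /A /B; ring.
  rewrite (_ : al = A + (c - a) / h * (B - A)); last by rewrite /A /B; field.
  by apply: affine_sqr_ge => //; apply: frac; lra.
- exists (a + 3 * h / 4); first by split; lra.
  move=> t /andP[tl tr].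
  rewrite (_ : al + d * (t - c) = B + (a + h - t) / h * (A - B)); last by rewrite /A /B; field.
  rewrite (_ : h ^+ 2 * d ^+ 2 = (A - B) ^+ 2); last by rewrite /A /B; ring.
  rewrite (_ : al = B + (a + h - c) / h * (A - B)); last by rewrite /A /B; field.
  by apply: affine_sqr_ge; [exact: ltW | apply: frac; lra ..].
Qed.

Lemma mixed_energy_ge0 (h b3 b5 b6 b7 : R) :
  0 <= b3 ^+ 2 + b5 ^+ 2 + b6 ^+ 2 + 3 * h ^+ 2 * b7 ^+ 2.
Proof.
have := sqr_ge0 (h * b7); have := sqr_ge0 b3; have := sqr_ge0 b5; have := sqr_ge0 b6.
by rewrite exprMn; lra.
Qed.

Lemma grad_incr_sqr_le (n0 n1 n2 y0 y1 y2 b3 b5 b6 b7 h : R) :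
  n0 ^+ 2 + n1 ^+ 2 + n2 ^+ 2 = 1 ->
  `|y0| <= 2 * h -> `|y1| <= 2 * h -> `|y2| <= 2 * h ->
  (n0 * (b6 * y1 + b5 * y2 + b7 * y1 * y2) + n1 * (b6 * y0 + b3 * y2 + b7 * y0 * y2)
     + n2 * (b5 * y0 + b3 * y1 + b7 * y0 * y1)) ^+ 2
  <= 48 * h ^+ 2 * (b3 ^+ 2 + b5 ^+ 2 + b6 ^+ 2 + 3 * h ^+ 2 * b7 ^+ 2).
Proof.
move=> unit_n /sqr_le_of_norm hy0 /sqr_le_of_norm hy1 /sqr_le_of_norm hy2.
apply: le_trans (cauchy_schwarz3 _ _ _ _ _ _) _; rewrite unit_n mul1r.
have term (b c y z : R) : y ^+ 2 <= (2 * h) ^+ 2 -> z ^+ 2 <= (2 * h) ^+ 2 ->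
    (b * y + c * z + b7 * y * z) ^+ 2 <= 12 * h ^+ 2 * (b ^+ 2 + c ^+ 2 + 4 * h ^+ 2 * b7 ^+ 2).
  move=> hy hz; apply: le_trans (sqr_sum3_le _ _ _) _.
  have yz : (y * z) ^+ 2 <= (2 * h) ^+ 2 * (2 * h) ^+ 2.
    by rewrite exprMn ler_pM ?sqr_ge0.
  have := ler_wpM2l (sqr_ge0 b) hy; have := ler_wpM2l (sqr_ge0 c) hz.
  have := ler_wpM2l (sqr_ge0 b7) yz.
  by rewrite !exprMn (_ : 2 ^+ 2 = 4 :> R); [lra | rewrite expr2; lra].
have hb : 0 <= h ^+ 2 * (b3 ^+ 2 + b5 ^+ 2 + b6 ^+ 2) by rewrite mulr_ge0 ?addr_ge0 ?sqr_ge0.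
have := term b6 b5 y1 y2 hy1 hy2; have := term b6 b3 y0 y2 hy0 hy2.
have := term b5 b3 y0 y1 hy0 hy1; lra.
Qed.

End RealInequalities.

Section Integrals.
Local Open Scope ereal_scope.
Context d (T : measurableType d) (R : realType) (mu : {measure set T -> \bar R}).

(* Unlike [ge0_le_integral], no measurability is needed: the integral of a
   nonnegative function is a supremum over its simple minorants. *)
Lemma ge0_le_integralT (f g : T -> \bar R) :
  (forall x, 0 <= f x) -> (forall x, f x <= g x) ->
  \int[mu]_x f x <= \int[mu]_x g x.
Proof.
move=> f0 fg; rewrite !ge0_integralTE // => [|x]; last exact: le_trans (f0 x) (fg x).
by apply: ereal_sup_le => _ [s sf <-]; exists s => //= x; exact: le_trans (sf x) (fg x).
Qed.

Lemma integral_ge_cst (D B : set T) (f : T -> R) (c : R) :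
  measurable B -> B `<=` D -> (0 <= c)%R ->
  (forall x, D x -> 0 <= f x)%R -> (forall x, B x -> c <= f x)%R ->
  c%:E * mu B <= \int[mu]_(x in D) (f x)%:E.
Proof.
move=> mB BD c0 f0 fc.
rewrite -integral_cst // integral_mkcond [leRHS]integral_mkcond.
apply: ge0_le_integralT => x; rewrite /patch /=.
  by case: ifP; rewrite // lee_fin.
case: ifP => [/set_mem Bx|_]; first by rewrite mem_set ?lee_fin ?fc //; exact: BD.
by case: ifP => // /set_mem Dx; rewrite lee_fin f0.
Qed.

Lemma integral_le_cst (D B : set T) (f : T -> R) (c : R) :
  measurable B -> D `<=` B -> (0 <= c)%R ->
  (forall x, D x -> 0 <= f x <= c)%R ->
  \int[mu]_(x in D) (f x)%:E <= c%:E * mu B.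
Proof.
move=> mB DB c0 fc.
rewrite -integral_cst // integral_mkcond [leRHS]integral_mkcond.
apply: ge0_le_integralT => x; rewrite /patch /=.
  by case: ifP => // /set_mem /fc /andP[]; rewrite lee_fin.
case: ifP => [/set_mem Dx|_]; last by case: ifP; rewrite // lee_fin.
by rewrite mem_set ?lee_fin; [case/andP: (fc x Dx) | exact: DB].
Qed.

End Integrals.

Section LebesgueBoxes.
Variable R : realType.
Local Open Scope ereal_scope.

Lemma lebesgue_measure_itvcc (a b : R) : (a <= b)%R ->
  lebesgue_measure (`[a, b]%classic : set R) = (b - a)%:E.
Proof.
move=> ab; rewrite lebesgue_measure_itv /= lte_fin.
case: ltP => [_|ba]; first by rewrite -EFinD.
have -> : b = a by apply/eqP; rewrite eq_le ab ba.
by rewrite subrr.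
Qed.

Lemma leb2_box (a0 b0 a1 b1 : R) : (a0 <= b0)%R -> (a1 <= b1)%R ->
  @leb2 R (`[a0, b0]%classic `*` `[a1, b1]%classic) = ((b0 - a0) * (b1 - a1))%:E.
Proof.
move=> h0 h1; rewrite /leb2 product_measure1E // EFinM.
by rewrite -(lebesgue_measure_itvcc h0) -(lebesgue_measure_itvcc h1).
Qed.

Lemma leb3_box (a0 b0 a1 b1 a2 b2 : R) : (a0 <= b0)%R -> (a1 <= b1)%R -> (a2 <= b2)%R ->
  @leb3 R ((`[a0, b0]%classic `*` `[a1, b1]%classic) `*` `[a2, b2]%classic) =
  ((b0 - a0) * (b1 - a1) * (b2 - a2))%:E.
Proof.
move=> h0 h1 h2; rewrite /leb3 product_measure1E //; last exact: measurableX.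
rewrite [X in (X * _)%E](_ : _ = ((b0 - a0) * (b1 - a1))%:E); last exact: leb2_box.
by rewrite [RHS]EFinM -(lebesgue_measure_itvcc h2).
Qed.

End LebesgueBoxes.

Section Geometry.
Variable R : realType.
Implicit Types (o u v w x y z : pt R) (h : R) (k : idx).

Lemma dot3 u v :
  dot u v = u ord0 i0 * v ord0 i0 + u ord0 i1 * v ord0 i1 + u ord0 i2 * v ord0 i2.
Proof. by rewrite /dot big_ord3. Qed.

Lemma dot_enorm1 v : enorm v = 1 -> dot v v = 1.
Proof.
move=> v1; have v0 : 0 <= dot v v by rewrite dot3 -!expr2 !addr_ge0 ?sqr_ge0.
by rewrite -(sqr_sqrtr v0) -/(enorm v) v1 expr1n.
Qed.

Lemma unit_coord_le1 v j : dot v v = 1 -> `|v ord0 j| <= 1.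
Proof.
rewrite dot3 -!expr2 => v1.
have : v ord0 j ^+ 2 <= 1.
  have := sqr_ge0 (v ord0 i0); have := sqr_ge0 (v ord0 i1); have := sqr_ge0 (v ord0 i2).
  by case: (ord3P j) => [|[|]] ->; lra.
by move=> hv; rewrite -ler_sqr ?nnegrE // real_normK ?num_real // expr1n.
Qed.

Lemma norm_dot_le z v c : dot v v = 1 -> (forall j, `|z ord0 j| <= c) ->
  `|dot z v| <= 3 * c.
Proof.
move=> v1 zc.
have zv j : `|z ord0 j * v ord0 j| <= c.
  by rewrite normrM -[c]mulr1 ler_pM ?unit_coord_le1.
rewrite dot3.
have := ler_normD (z ord0 i0 * v ord0 i0 + z ord0 i1 * v ord0 i1) (z ord0 i2 * v ord0 i2).
have := ler_normD (z ord0 i0 * v ord0 i0) (z ord0 i1 * v ord0 i1).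
have := zv i0; have := zv i1; have := zv i2; lra.
Qed.

Lemma plane_coord_le u w q1 q2 c : dot u u = 1 -> dot w w = 1 -> dot u w = 0 ->
  (forall j, `|(q1 *: u + q2 *: w) ord0 j| <= c) -> `|q1| <= 3 * c /\ `|q2| <= 3 * c.
Proof.
move=> u1 w1 uw zc; set z := q1 *: u + q2 *: w.
have zu : dot z u = q1.
  transitivity (q1 * dot u u + q2 * dot u w); first by rewrite !dot3 !mxE; ring.
  by rewrite u1 uw mulr1 mulr0 addr0.
have zw : dot z w = q2.
  transitivity (q1 * dot u w + q2 * dot w w); first by rewrite !dot3 !mxE; ring.
  by rewrite w1 uw mulr1 mulr0 add0r.
by rewrite -zu -zw; split; exact: norm_dot_le.
Qed.

Lemma edge_sub_cube o h k E : 0 <= h -> is_edge o h k E -> E `<=` cube o h k.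
Proof.
move=> h0 [i [d [bd di ->]]] _ [t /= t01 <-] j.
rewrite /vtx /ivec /eidx !mxE !intrD eqxx /=.
rewrite in_itv /= in t01; case/andP: t01 => t0 t1.
have [->|ji] := eqVneq j i.
  by rewrite di /= rmorph0 rmorph1 addr0; apply/andP; split; nra.
rewrite mulr0n rmorph0 addr0 subrr mulr0 addr0.
by case: (bd j) => ->; rewrite ?rmorph0 ?rmorph1; apply/andP; split; lra.
Qed.

Lemma KT_vertices_sub_cube o h k G D1 D2 D3 : 0 <= h ->
  KT_vertices o h k G D1 D2 D3 -> [/\ cube o h k D1, cube o h k D2 & cube o h k D3].
Proof.
move=> h0 [[[_ [E1 [eE1 E1D]]] [_ [E2 [eE2 E2D]]] [_ [E3 [eE3 E3D]]]] _].
by split; [exact: (edge_sub_cube h0 eE1) | exact: (edge_sub_cube h0 eE2)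
  | exact: (edge_sub_cube h0 eE3)].
Qed.

Lemma cube_centroid o h k x y z : cube o h k x -> cube o h k y -> cube o h k z ->
  cube o h k (3^-1 *: (x + y + z)).
Proof.
move=> cx cy cz j.
rewrite (_ : (3^-1 *: (x + y + z)) ord0 j = 3^-1 * (x ord0 j + y ord0 j + z ord0 j));
  last by rewrite !mxE.
by move: (cx j) (cy j) (cz j) => /andP[? ?] /andP[? ?] /andP[? ?]; apply/andP; split; lra.
Qed.

Lemma cube_sub_omegaT o h M k : k \in M -> cube o h k `<=` omegaT o h M k.
Proof. by move=> kM x Tx; exists k => //; split => //; exists x. Qed.

Lemma omegaT_near o h M k x y j : omegaT o h M k x -> cube o h k y ->
  `|x ord0 j - y ord0 j| <= 2 * h.
Proof.
move=> [k' _ [[z [Tz T'z]] T'x]] Ty; rewrite ler_norml.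
move: (Tz j) (T'z j) (T'x j) (Ty j) => /andP[? ?] /andP[? ?] /andP[? ?] /andP[? ?].
apply/andP; split; lra.
Qed.

End Geometry.

Section Trilinear.
Variable R : realType.
Implicit Types (c n x D : pt R).

(* b_m is the coefficient of y0^m2 y1^m1 y2^m0, where y = x - c and m = 4 m2 + 2 m1 + m0. *)
Definition trilin c (b0 b1 b2 b3 b4 b5 b6 b7 : R) x : R :=
  let y0 := x ord0 i0 - c ord0 i0 in
  let y1 := x ord0 i1 - c ord0 i1 in
  let y2 := x ord0 i2 - c ord0 i2 in
  b0 + b1 * y2 + b2 * y1 + b3 * y1 * y2 + b4 * y0 + b5 * y0 * y2 + b6 * y0 * y1
  + b7 * y0 * y1 * y2.

Lemma ev_coord i j (t : R) x : (t *: ev R i + x) ord0 j = t * (j == i)%:R + x ord0 j.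
Proof. by rewrite /ev !mxE. Qed.

Lemma pd_affine_line (f : pt R -> R) i x (b : R) :
  (forall t, f (t *: ev R i + x) = f x + t * b) -> pd i f x = b.
Proof.
move=> fb; rewrite /pd /derive.
apply/cvg_lim; first exact: Rhausdorff.
apply: cvg_trans (cvg_cst b).
apply: near_eq_cvg; near=> t.
have t0 : t != 0.
  by near: t; exact: (@nbhs_dnbhs_neq R 0).
by rewrite /= fb addrC addKr /GRing.scale /= mulrA mulVf ?mul1r.
Unshelve. all: try by end_near. all: exact: _.
Qed.

Lemma pd0_trilin c b0 b1 b2 b3 b4 b5 b6 b7 :
  pd i0 (trilin c b0 b1 b2 b3 b4 b5 b6 b7) = trilin c b4 b5 b6 b7 0 0 0 0.
Proof.
apply: funext => x; apply: pd_affine_line => t.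
by rewrite /trilin !ev_coord eqxx -!val_eqE /= !inordK // !mulr0n; ring.
Qed.

Lemma pd1_trilin c b0 b1 b2 b3 b4 b5 b6 b7 :
  pd i1 (trilin c b0 b1 b2 b3 b4 b5 b6 b7) = trilin c b2 b3 0 0 b6 b7 0 0.
Proof.
apply: funext => x; apply: pd_affine_line => t.
by rewrite /trilin !ev_coord eqxx -!val_eqE /= !inordK // !mulr0n; ring.
Qed.

Lemma pd2_trilin c b0 b1 b2 b3 b4 b5 b6 b7 :
  pd i2 (trilin c b0 b1 b2 b3 b4 b5 b6 b7) = trilin c b1 0 b3 0 b5 0 b7 0.
Proof.
apply: funext => x; apply: pd_affine_line => t.
by rewrite /trilin !ev_coord eqxx -!val_eqE /= !inordK // !mulr0n; ring.
Qed.

Lemma Q1_trilin (p : pt R -> R) c : Q1 p ->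
  exists b0 b1 b2 b3 b4 b5 b6 b7, p = trilin c b0 b1 b2 b3 b4 b5 b6 b7.
Proof.
case=> a pa; pose o : 'I_2 := ord0; pose l : 'I_2 := lift ord0 ord0.
set c0 := c ord0 i0; set c1 := c ord0 i1; set c2 := c ord0 i2.
exists (p c), (a o o l + a o l l * c1 + a l o l * c0 + a l l l * c0 * c1),
  (a o l o + a o l l * c2 + a l l o * c0 + a l l l * c0 * c2),
  (a o l l + a l l l * c0),
  (a l o o + a l o l * c2 + a l l o * c1 + a l l l * c1 * c2),
  (a l o l + a l l l * c1), (a l l o + a l l l * c2), (a l l l).
apply: funext => x; rewrite !pa !big_ord_recl !big_ord0 /= /trilin -/c0 -/c1 -/c2.
by rewrite !expr0 !expr1 /o /l; ring.
Qed.

Lemma grad_dot_trilin c b0 b1 b2 b3 b4 b5 b6 b7 x n :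
  grad_dot (trilin c b0 b1 b2 b3 b4 b5 b6 b7) x n =
  let y0 := x ord0 i0 - c ord0 i0 in
  let y1 := x ord0 i1 - c ord0 i1 in
  let y2 := x ord0 i2 - c ord0 i2 in
  n ord0 i0 * (b4 + b5 * y2 + b6 * y1 + b7 * y1 * y2)
  + n ord0 i1 * (b2 + b3 * y2 + b6 * y0 + b7 * y0 * y2)
  + n ord0 i2 * (b1 + b3 * y1 + b5 * y0 + b7 * y0 * y1).
Proof. by rewrite /grad_dot big_ord3 pd0_trilin pd1_trilin pd2_trilin /trilin /=; ring. Qed.

Lemma CT_trilin (bm bp : R) c n D (b0 b1 b2 b3 b4 b5 b6 b7 : R) :
  let kappa := (bm / bp - 1) * (n ord0 i0 * b4 + n ord0 i1 * b2 + n ord0 i2 * b1) in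
  CT bm bp c n D (trilin c b0 b1 b2 b3 b4 b5 b6 b7) =
  trilin c (b0 + kappa * dot (c - D) n) (b1 + kappa * n ord0 i2) (b2 + kappa * n ord0 i1)
    b3 (b4 + kappa * n ord0 i0) b5 b6 b7.
Proof.
by apply: funext => x; rewrite /CT grad_dot_trilin /trilin /= !dot3 !mxE; ring.
Qed.

(* (grad p (c + y) - grad p c) . n for p = trilin c b0 .. b7 *)
Definition trilin_grad_incr (b3 b5 b6 b7 : R) n (y : pt R) : R :=
  let y0 := y ord0 i0 in let y1 := y ord0 i1 in let y2 := y ord0 i2 in
  n ord0 i0 * (b6 * y1 + b5 * y2 + b7 * y1 * y2)
  + n ord0 i1 * (b6 * y0 + b3 * y2 + b7 * y0 * y2)
  + n ord0 i2 * (b5 * y0 + b3 * y1 + b7 * y0 * y1).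

Lemma CT_trilin_jump (bm bp : R) c n D x (b0 b1 b2 b3 b4 b5 b6 b7 : R) :
  bp != 0 -> dot n n = 1 ->
  let p := trilin c b0 b1 b2 b3 b4 b5 b6 b7 in
  bp * grad_dot (CT bm bp c n D p) x n - bm * grad_dot p x n =
  (bp - bm) * trilin_grad_incr b3 b5 b6 b7 n (x - c).
Proof.
move=> bp0; rewrite dot3 => n1 p.
have bpk : bp * (bm / bp - 1) = bm - bp by field.
set g := n ord0 i0 * b4 + n ord0 i1 * b2 + n ord0 i2 * b1.
apply: (@eq_trans _ _ ((bp - bm) * trilin_grad_incr b3 b5 b6 b7 n (x - c) + (bp - bm) * g
  + bp * (bm / bp - 1) * g
    * (n ord0 i0 * n ord0 i0 + n ord0 i1 * n ord0 i1 + n ord0 i2 * n ord0 i2))).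
  by rewrite /p CT_trilin !grad_dot_trilin /trilin_grad_incr /= !mxE /g; ring.
by rewrite n1 bpk; ring.
Qed.

End Trilinear.

Section SobolevBounds.
Variable R : realType.
Local Open Scope ereal_scope.

Lemma mk3E (x0 x1 x2 : R) :
  [/\ mk3 x0 x1 x2 ord0 i0 = x0, mk3 x0 x1 x2 ord0 i1 = x1 & mk3 x0 x1 x2 ord0 i2 = x2].
Proof. by rewrite /mk3 !mxE /i0 /i1 /i2 !inordK. Qed.

Lemma int3_box_ge (A : set (pt R)) (f : pt R -> R) (l r : 'I_3 -> R) (c : R) :
  (forall j, l j <= r j)%R -> (0 <= c)%R -> (forall x, 0 <= f x)%R ->
  (forall x : pt R, (forall j, l j <= x ord0 j <= r j)%R -> A x /\ (c <= f x)%R) ->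
  (c * ((r i0 - l i0) * (r i1 - l i1) * (r i2 - l i2)))%:E <= int3 A f.
Proof.
move=> lr c0 f0 box.
have inbox (x0 x1 x2 : R) : (l i0 <= x0 <= r i0)%R -> (l i1 <= x1 <= r i1)%R ->
    (l i2 <= x2 <= r i2)%R -> forall j, (l j <= mk3 x0 x1 x2 ord0 j <= r j)%R.
  by have [e0 e1 e2] := mk3E x0 x1 x2; move=> ? ? ? j; case: (ord3P j) => [|[|]] ->;
    rewrite ?e0 ?e1 ?e2.
rewrite EFinM -(leb3_box (lr i0) (lr i1) (lr i2)); apply: integral_ge_cst => //.
- by apply: measurableX; [apply: measurableX|]; exact: measurable_itv.
- move=> [[x0 x1] x2] [[/= + +] +]; rewrite !in_itv /= => h0 h1 h2.
  by have [] := box _ (inbox _ _ _ h0 h1 h2).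
- move=> [[x0 x1] x2] [[/= + +] +]; rewrite !in_itv /= => h0 h1 h2.
  by have [] := box _ (inbox _ _ _ h0 h1 h2).
Qed.

Lemma int3_affine_sqr_ge (o c : pt R) (h : R) (k : idx) (A : set (pt R))
    (g : pt R -> R) (j : 'I_3) (al d : R) :
  (0 < h)%R -> cube o h k `<=` A -> cube o h k c ->
  (forall x, g x = al + d * (x ord0 j - c ord0 j))%R ->
  (h ^+ 3 * (al ^+ 2 + h ^+ 2 * d ^+ 2) / 80)%:E <= int3 A (fun x => g x ^+ 2)%R.
Proof.
move=> h0 TA Tc gE; set a := vtx o h k ord0.
have [s [sl sr] quarter] := affine_sqr_ge_on_quarter al d h0 (Tc j).
pose l (i : 'I_3) := if i == j then s else a i.
pose r (i : 'I_3) := (l i + if i == j then h / 4 else h)%R.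
have -> : (h ^+ 3 * (al ^+ 2 + h ^+ 2 * d ^+ 2) / 80 =
    (al ^+ 2 + h ^+ 2 * d ^+ 2) / 20 * ((r i0 - l i0) * (r i1 - l i1) * (r i2 - l i2)))%R.
  rewrite /r /l; case: (ord3P j) => [|[|]] ->;
  by rewrite -!val_eqE /= !inordK // /=; field.
apply: int3_box_ge => [i||x|x xbox].
- by rewrite /r lerDl; case: ifP => _; lra.
- by have := sqr_ge0 al; have := sqr_ge0 (h * d); rewrite exprMn; lra.
- exact: sqr_ge0.
split; last by have := xbox j; rewrite gE /r /l eqxx; exact: quarter.
apply: TA => i; have := xbox i; rewrite /r /l /a.
case: ifP => [/eqP ->|_] /andP[xl xr]; apply/andP; split => //.
- exact: le_trans sl xl.
- exact: le_trans xr sr.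
Qed.

Lemma sum_ord3_ge_offdiag (g : 'I_3 -> 'I_3 -> \bar R) :
  (forall i j, 0 <= g i j) -> g i0 i1 + g i0 i2 + g i1 i2 <= \sum_(i < 3) \sum_(j < 3) g i j.
Proof.
move=> g0; rewrite !big_ord3 /=.
apply: lee_paddr; first by rewrite !adde_ge0.
apply: leeD; last by apply: lee_paddl; rewrite ?adde_ge0.
by apply: leeD2r; apply: lee_paddl.
Qed.

Lemma H2semi_sq_trilin_ge (o c : pt R) (h : R) (k : idx) (A : set (pt R))
    (b0 b1 b2 b3 b4 b5 b6 b7 : R) :
  (0 < h)%R -> cube o h k `<=` A -> cube o h k c ->
  (h ^+ 3 * (b3 ^+ 2 + b5 ^+ 2 + b6 ^+ 2 + 3 * h ^+ 2 * b7 ^+ 2) / 80)%:E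
  <= H2semi_sq A (trilin c b0 b1 b2 b3 b4 b5 b6 b7).
Proof.
move=> h0 TA Tc; rewrite /H2semi_sq.
apply: le_trans (sum_ord3_ge_offdiag _); last first.
  by move=> i j; apply: integral_ge0 => x _; rewrite lee_fin sqr_ge0.
rewrite /= !(pd0_trilin, pd1_trilin, pd2_trilin).
have aff01 x : trilin c b6 b7 0 0 0 0 0 0 x = (b6 + b7 * (x ord0 i2 - c ord0 i2))%R.
  by rewrite /trilin; ring.
have aff02 x : trilin c b5 0 b7 0 0 0 0 0 x = (b5 + b7 * (x ord0 i1 - c ord0 i1))%R.
  by rewrite /trilin; ring.
have aff12 x : trilin c b3 0 0 0 b7 0 0 0 x = (b3 + b7 * (x ord0 i0 - c ord0 i0))%R.
  by rewrite /trilin; ring.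
apply: le_trans (leeD (leeD (int3_affine_sqr_ge h0 TA Tc aff01)
  (int3_affine_sqr_ge h0 TA Tc aff02)) (int3_affine_sqr_ge h0 TA Tc aff12)).
by rewrite -!EFinD lee_fin le_eqVlt; apply/orP; left; apply/eqP; field.
Qed.

Lemma planeL2_sq_le (D u w : pt R) (A : set (pt R)) (g : pt R -> R) (r m : R) :
  (0 <= r)%R -> (0 <= m)%R ->
  (forall q1 q2 : R, A (D + q1 *: u + q2 *: w)%R ->
     [/\ `|q1| <= r, `|q2| <= r & g (D + q1 *: u + q2 *: w) ^+ 2 <= m]%R) ->
  planeL2_sq D u w A g <= (m * (2 * r) ^+ 2)%:E.
Proof.
move=> r0 m0 bnd; rewrite /planeL2_sq.
have Nr : (- r <= r)%R by lra.
rewrite (_ : (2 * r) ^+ 2 = (r - - r) * (r - - r))%R; last by ring.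
rewrite EFinM -(leb2_box Nr Nr); apply: integral_le_cst => //.
- by apply: measurableX; exact: measurable_itv.
- move=> [q1 q2] /= /bnd[q1r q2r _].
  by split; rewrite /= in_itv /= -ler_norml.
- by move=> [q1 q2] /= /bnd[_ _ gm]; rewrite sqr_ge0.
Qed.

End SobolevBounds.

Section InterfaceEstimate.
Variable R : realType.

Lemma planeL2_jump_le (o : pt R) (h : R) (M : seq idx) (k : idx) (bm bp : R)
    (c nb D u w : pt R) (p : pt R -> R) (b0 b1 b2 b3 b4 b5 b6 b7 : R) :
  0 <= h -> bp != 0 -> dot nb nb = 1 -> dot u u = 1 -> dot w w = 1 -> dot u w = 0 ->
  cube o h k c -> cube o h k D -> p = trilin c b0 b1 b2 b3 b4 b5 b6 b7 ->
  (planeL2_sq D u w (omegaT o h M k)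
     (fun x => bp * grad_dot (CT bm bp c nb D p) x nb - bm * grad_dot p x nb)%R
   <= ((bp - bm) ^+ 2 * (48 * h ^+ 2 * (b3 ^+ 2 + b5 ^+ 2 + b6 ^+ 2 + 3 * h ^+ 2 * b7 ^+ 2))
       * (2 * (3 * (2 * h))) ^+ 2)%:E)%E.
Proof.
move=> h0 bp0 nb1 u1 w1 uw Tc TD ->.
have S0 := mixed_energy_ge0 h b3 b5 b6 b7.
apply: planeL2_sq_le => [||q1 q2 oq]; first by rewrite !mulr_ge0.
  by rewrite mulr_ge0 ?sqr_ge0 // !mulr_ge0 ?sqr_ge0.
have [q1r q2r] : `|q1| <= 3 * (2 * h) /\ `|q2| <= 3 * (2 * h).
  apply: (plane_coord_le u1 w1 uw) => j.
  rewrite (_ : (q1 *: u + q2 *: w) ord0 j = (D + q1 *: u + q2 *: w) ord0 j - D ord0 j).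
    exact: omegaT_near j oq TD.
  by rewrite !mxE; ring.
split => //; rewrite CT_trilin_jump // exprMn ler_wpM2l ?sqr_ge0 //.
have near j : `|(D + q1 *: u + q2 *: w - c) ord0 j| <= 2 * h.
  by have := omegaT_near j oq Tc; rewrite !mxE.
by apply: grad_incr_sqr_le; rewrite ?near //; move: nb1; rewrite dot3 -!expr2.
Qed.

Lemma jump_le_H2_of_bounds (J H : \bar R) (a h S : R) : 0 <= h -> 0 <= S ->
  (J <= (a ^+ 2 * (48 * h ^+ 2 * S) * (2 * (3 * (2 * h))) ^+ 2)%:E)%E ->
  ((h ^+ 3 * S / 80)%:E <= H)%E ->
  (J <= ((12 * 64 * a) ^+ 2 * h)%:E * H)%E.
Proof.
move=> h0 S0 JJ HH; apply: le_trans JJ _.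
have c0 : (0 <= ((12 * 64 * a) ^+ 2 * h)%:E)%E by rewrite lee_fin mulr_ge0 ?sqr_ge0.
apply: le_trans (lee_wpmul2l c0 HH); rewrite -EFinM lee_fin.
have X0 : 0 <= a ^+ 2 * h ^+ 4 * S.
  by apply: mulr_ge0 => //; apply: mulr_ge0; [exact: sqr_ge0 | exact: exprn_ge0].
(* the constant works because (12 * 64) ^ 2 / 80 >= 48 * 144 *)
rewrite (_ : _ * (2 * (3 * (2 * h))) ^+ 2 = 144 * 48 * (a ^+ 2 * h ^+ 4 * S)); last by ring.
rewrite (_ : _ * (_ / 80) = 144 * (64 * 64 / 80) * (a ^+ 2 * h ^+ 4 * S)); last by ring.
by rewrite ler_wpM2r // ler_pM2l //; lra.
Qed.

End InterfaceEstimate.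

Theorem lemma4p5 (R : realType) :
  exists C : R, forall (o : pt R) (h : R) (M : seq (idx)) (Om Omm Omp G : set (pt R))
    (bm bp : R) (k : idx) (D1 D2 D3 nb u w : pt R) (p : pt R -> R),
    setting o h M Om Omm Omp G ->
    0 < bm -> bm <= bp ->
    (* T = cube o h k is an interface element *)
    k \in M -> cube o h k `&` G !=set0 ->
    (* K_T, its plane tau(T), unit normal nb *)
    KT_vertices o h k G D1 D2 D3 ->
    enorm nb = 1 -> dot nb (D2 - D1) = 0 -> dot nb (D3 - D1) = 0 ->
    (* (u, w) an orthonormal frame of tau(T) *)
    enorm u = 1 -> enorm w = 1 -> dot u w = 0 -> dot u nb = 0 -> dot w nb = 0 ->
    Q1 p ->
    let F := (3%:R)^-1 *: (D1 + D2 + D3) in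
    let vm := p in
    let vp := CT bm bp F nb D1 p in
    let omega := omegaT o h M k in
    let jump := fun x => bp * grad_dot vp x nb - bm * grad_dot vm x nb in
    (planeL2_sq D1 u w omega jump <= ((C * (bp - bm)) ^+ 2 * h)%:E * H2semi_sq omega vp)%E /\
    (planeL2_sq D1 u w omega jump <= ((C * (bp - bm)) ^+ 2 * h)%:E * H2semi_sq omega vm)%E.
Proof.
(* Besides |nb| = 1 and the orthonormality of (u, w), only the fact that D1 and F
   lie in T is used: nb need not be normal to K_T nor (u, w) parallel to it. *)
exists (12 * 64) => o h M Om Omm Omp G bm bp k D1 D2 D3 nb u w p [h0 _] bm0 bmp kM _ KT
  nb1 _ _ u1 w1 uw _ _ Qp F vm vp omega jump.
have bp0 : bp != 0 := lt0r_neq0 (lt_le_trans bm0 bmp).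
have [TD1 TD2 TD3] := KT_vertices_sub_cube (ltW h0) KT.
have TF : cube o h k F := cube_centroid TD1 TD2 TD3.
have Tomega : cube o h k `<=` omega := cube_sub_omegaT kM.
have [b0 [b1 [b2 [b3 [b4 [b5 [b6 [b7 pE]]]]]]]] := Q1_trilin F Qp.
have bound := planeL2_jump_le M bm (ltW h0) bp0
  (dot_enorm1 nb1) (dot_enorm1 u1) (dot_enorm1 w1) uw TF TD1 pE.
rewrite /vp /vm pE; split;
  apply: jump_le_H2_of_bounds (ltW h0) (mixed_energy_ge0 _ _ _ _ _) bound _;
  rewrite ?CT_trilin; exact: H2semi_sq_trilin_ge h0 Tomega TF.
Qed.
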